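(* Let $p\ge5$ be a prime and let $\alpha=\frac{P+\sqrt D}{Q}\in\mathbb{Q}_p$, where $P,Q\in\mathbb{Z}$, $Q\ne0$, $D$ is a non-square integer with $\sqrt D\in\mathbb{Q}_p$, and $Q\mid D-P^2$. Let $N=\lceil\log_2 p\rceil$. Define sequences by $P_0=P$, $Q_0=Q$, $\alpha_n=\frac{P_n+\sqrt D}{Q_n}$, $b_n=\bar s(\alpha_n)$ if $N\mid n$ and $b_n=\bar t(\alpha_n)$ otherwise (i.e. $b_{Nk}=\bar s(\alpha_{Nk})$ and $b_{Nk+j}=\bar t(\alpha_{Nk+j})$ for $1\le j\le N-1$), and $P_{n+1}=b_nQ_n-P_n$, $Q_{n+1}=\frac{D-P_{n+1}^2}{Q_n}$ (so that $\alpha_{n+1}=\frac{1}{\alpha_n-b_n}$), and assume all $b_n$ are nonzero. Let $M=\max\left\{|Q|,\ \frac{p^2}{4}|D|+1,\ \frac{4(p^2+1)}{3}\right\}$. Then $|Q_n|\le\frac{p^2}{4}M+1$ for all $n\ge0$.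
   Context: Let $\mathcal{R}=\{-\frac{p-1}{2},\dots,0,\dots,\frac{p-1}{2}\}$. Every nonzero $\beta\in\mathbb{Q}_p$ is written uniquely as $\beta=\sum_{n\ge r}a_np^n$ with $r=v_p(\beta)$, $a_n\in\mathcal{R}$, $a_r\ne0$. Put $s(\beta)=\sum_{n=r}^{0}a_np^n$, $t(\beta)=\sum_{n=r}^{-1}a_np^n$ (empty sums are $0$). With $\operatorname{round}(x)$ the integer nearest to the real $x$, for $\beta=\frac{P'+\sqrt D}{Q'}$ ($P',Q'\in\mathbb{Q}$, $Q'\ne0$) define $\bar s(\beta)=\operatorname{round}\!\left(\frac{P'/Q'-s(\beta)}{p}\right)p+s(\beta)$ and $\bar t(\beta)=\operatorname{round}\!\left(P'/Q'-t(\beta)\right)+t(\beta)$. Absolute values $|\cdot|$ are the usual real ones. *)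

From HB Require Import structures.
From mathcomp Require Import all_boot all_order all_algebra.
Set Implicit Arguments. Unset Strict Implicit. Unset Printing Implicit Defensive.
Import Order.TTheory GRing.Theory Num.Theory.
Local Open Scope ring_scope.

(* Everything is rational-valued; |.| on rat is the usual real absolute value. *)

(* q ∈ p^m Z_(p) for a rational q and an integer m. *)
Definition inpZ (p : nat) (m : int) (q : rat) : bool :=
  ~~ (p%:Z %| denq (q / (p%:Q ^ m)))%Z.

(* A p-adic integer zeta ∈ Z_p, given by a coherent sequence of integer
   approximations z k (zeta ≡ z k mod p^k), is a square root of D. *)
Definition padic_sqrt (p : nat) (D : int) (z : nat -> int) : Prop :=
  (forall k : nat, (z k.+1 == z k %[mod (p ^ k)%:Z])%Z) /\
  (forall k : nat, ((z k) ^+ 2 == D %[mod (p ^ k)%:Z])%Z).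

(* x + y * zeta ∈ p^m Z_p  (x, y rational; zeta given by z). *)
Definition inpZp (p : nat) (z : nat -> int) (x y : rat) (m : int) : Prop :=
  exists K : nat, forall k : nat, (K <= k)%N -> inpZ p m (x + y * (z k)%:~R).

Definition zsum (lo hi : int) (f : int -> rat) : rat :=
  if lo <= hi then \sum_(i < absz (hi - lo + 1)) f (lo + (i : nat)%:Z) else 0.

(* a (from index r on) is the balanced p-adic expansion of
   beta = (P' + zeta)/Q', with r = v_p(beta), a r <> 0, digits in R. *)
Definition padic_expansion (p : nat) (z : nat -> int) (P' Q' : rat)
    (a : int -> int) (r : int) : Prop :=
  a r != 0 /\
  (forall n : int, r <= n -> (absz (a n) <= (p.-1)./2)%N) /\
  (forall N : int,
     inpZp p z (P' / Q' - zsum r N (fun n => (a n)%:~R * p%:Q ^ n)) Q'^-1 (N + 1)).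

Definition s_of (p : nat) (z : nat -> int) (P' Q' s : rat) : Prop :=
  exists a r, padic_expansion p z P' Q' a r /\
              s = zsum r 0 (fun n => (a n)%:~R * p%:Q ^ n).
Definition t_of (p : nat) (z : nat -> int) (P' Q' t : rat) : Prop :=
  exists a r, padic_expansion p z P' Q' a r /\
              t = zsum r (-1) (fun n => (a n)%:~R * p%:Q ^ n).

Definition nearest (x : rat) (k : int) : Prop := `|x - k%:~R| <= 1 / 2.

Definition sbar_of (p : nat) (z : nat -> int) (P' Q' b : rat) : Prop :=
  exists s k, s_of p z P' Q' s /\ nearest ((P' / Q' - s) / p%:Q) k /\
              b = k%:~R * p%:Q + s.
Definition tbar_of (p : nat) (z : nat -> int) (P' Q' b : rat) : Prop :=
  exists t k, t_of p z P' Q' t /\ nearest (P' / Q' - t) k /\ b = k%:~R + t.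

(* The partial quotients b_n have only powers of p in their denominators and
   alpha_n - b_n is a p-adic integer; with Q_n | D - P_n^2 this forces P_{n+1}
   and Q_{n+1} to be integers with Q_{n+1} | D - P_{n+1}^2, and Q_{n+1} <> 0
   because D is not a square.  Hence |Q_n| >= 1 for all n.  On the real side
   |b_n - P_n/Q_n| <= p/2 at the s-steps (N | n) and <= 1/2 at the t-steps, so
   |Q_{n+1}| <= |D|/|Q_n| + (p/2)^2 |Q_n|, resp. |D|/|Q_n| + |Q_n|/4.  An s-step
   from |Q_n| <= M yields at most B = p^2 M/4 + 1; the N - 1 following t-steps
   contract towards 4|D|/3, and (p + 1)^2 <= 4^N brings the bound back below M
   before the next s-step. *)

From HB Require Import structures.
From mathcomp Require Import all_boot all_order all_algebra.
From mathcomp Require Import zify ring lra.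
Import Order.TTheory GRing.Theory Num.Theory.
Local Open Scope ring_scope.

Definition p_integral (p : nat) (q : rat) : Prop :=
  exists a c : int, ~~ (p%:Z %| c)%Z /\ q = a%:~R / c%:~R.

Definition p_power_denom (p : nat) (q : rat) : Prop :=
  exists m : nat, q * p%:Q ^+ m \is a Num.int.

Section PIntegral.
Context {p : nat} (p_prime : prime p).

Lemma p_neq0 : p%:Q != 0.
Proof. by rewrite intr_eq0 eqz_nat -lt0n prime_gt0. Qed.

Lemma ndvdz_mul {c c' : int} :
  ~~ (p%:Z %| c)%Z -> ~~ (p%:Z %| c')%Z -> ~~ (p%:Z %| c * c')%Z.
Proof. by rewrite !dvdzE abszM Euclid_dvdM // negb_or => -> ->. Qed.

Lemma ndvdz_neq0 {c : int} : ~~ (p%:Z %| c)%Z -> c != 0.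
Proof. by apply: contra => /eqP ->; rewrite dvdz0. Qed.

Lemma p_integral_int (q : rat) : q \is a Num.int -> p_integral p q.
Proof.
move/intrP=> [a ->]; exists a, 1; split; last by rewrite divr1.
by rewrite dvdzE /= dvdn1; apply: contraTneq (prime_gt1 p_prime) => ->.
Qed.

Lemma p_integralD {x y : rat} :
  p_integral p x -> p_integral p y -> p_integral p (x + y).
Proof.
move=> [a [c [pc ->]]] [a' [c' [pc' ->]]].
exists (a * c' + a' * c), (c * c'); split; first exact: ndvdz_mul.
have c_neq0 : c%:~R != 0 :> rat by rewrite intr_eq0 (ndvdz_neq0 pc).
have c'_neq0 : c'%:~R != 0 :> rat by rewrite intr_eq0 (ndvdz_neq0 pc').
by rewrite !rmorphD !rmorphM /=; field; apply/andP.
Qed.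

Lemma p_integralM {x y : rat} :
  p_integral p x -> p_integral p y -> p_integral p (x * y).
Proof.
move=> [a [c [pc ->]]] [a' [c' [pc' ->]]].
exists (a * a'), (c * c'); split; first exact: ndvdz_mul.
have c_neq0 : c%:~R != 0 :> rat by rewrite intr_eq0 (ndvdz_neq0 pc).
have c'_neq0 : c'%:~R != 0 :> rat by rewrite intr_eq0 (ndvdz_neq0 pc').
by rewrite !rmorphM /=; field; apply/andP.
Qed.

Lemma p_integralN {x : rat} : p_integral p x -> p_integral p (- x).
Proof. by move=> [a [c [pc ->]]]; exists (- a), c; rewrite rmorphN mulNr. Qed.

Lemma p_integralB {x y : rat} :
  p_integral p x -> p_integral p y -> p_integral p (x - y).
Proof. by move=> px py; apply: p_integralD px (p_integralN py). Qed.

Lemma p_integral_inpZ (m : nat) (q : rat) : inpZ p m q -> p_integral p q.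
Proof.
rewrite /inpZ -exprnP => pq.
have -> : q = (q / p%:Q ^+ m) * p%:Q ^+ m by rewrite divfK // expf_neq0 // p_neq0.
apply: p_integralM.
  by exists (numq (q / p%:Q ^+ m)), (denq (q / p%:Q ^+ m)); rewrite divq_num_den.
by apply: p_integral_int; rewrite rpredX // rpred_int.
Qed.

Lemma p_integral_frac {u Q : int} {k : nat} : Q != 0 -> (logn p `|Q| <= k)%N ->
  ((p ^ k)%:Z %| u)%Z -> p_integral p (u%:~R / Q%:~R).
Proof.
move=> Q0 vQ /dvdzP [w ->].
have Q_gt0 : (0 < `|Q|)%N by rewrite absz_gt0.
have [c pc] := pfactor_coprime p_prime Q_gt0; set l := logn p _ in vQ * => QE.
have c0 : c%:Z != 0 by move: Q_gt0; rewrite QE muln_gt0 eqz_nat -lt0n => /andP[].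
exists (sgz Q * w * (p ^ (k - l))%:Z), c%:Z; split.
  by rewrite dvdzE /= -prime_coprime // coprime_sym.
have e : w * (p ^ k)%N * c = sgz Q * w * (p ^ (k - l))%N * Q.
  transitivity (w * (p ^ (k - l))%N * (sgz Q * Q)); last by ring.
  by rewrite -abszEsg QE -{1}(subnK vQ) expnD !PoszM; ring.
by apply/eqP; rewrite eqr_div ?intr_eq0 // -!intrM e.
Qed.

Lemma p_power_denom_int (q : rat) : q \is a Num.int -> p_power_denom p q.
Proof. by exists 0%N; rewrite mulr1. Qed.

Lemma p_power_denomD {x y : rat} :
  p_power_denom p x -> p_power_denom p y -> p_power_denom p (x + y).
Proof.
move=> [m hm] [n hn]; exists (m + n)%N.
have -> : (x + y) * p%:Q ^+ (m + n) =
          x * p%:Q ^+ m * p%:Q ^+ n + y * p%:Q ^+ n * p%:Q ^+ m.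
  by rewrite exprD; ring.
by apply: rpredD; apply: rpredM; rewrite // rpredX ?rpred_int.
Qed.

Lemma p_power_denomM {x y : rat} :
  p_power_denom p x -> p_power_denom p y -> p_power_denom p (x * y).
Proof.
move=> [m hm] [n hn]; exists (m + n)%N.
have -> : x * y * p%:Q ^+ (m + n) = x * p%:Q ^+ m * (y * p%:Q ^+ n).
  by rewrite exprD; ring.
exact: rpredM.
Qed.

Lemma p_power_denomN {x : rat} : p_power_denom p x -> p_power_denom p (- x).
Proof. by move=> [m hm]; exists m; rewrite mulNr rpredN. Qed.

Lemma p_power_denom_zsum (a : int -> int) (r N : int) :
  p_power_denom p (zsum r N (fun n => (a n)%:~R * p%:Q ^ n)).
Proof.
exists (absz r); rewrite /zsum; case: ifP => _; last by rewrite mul0r.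
rewrite mulr_suml; apply: rpred_sum => i _; rewrite -mulrA rpredM ?rpred_int //.
have e : r + (i : nat)%:Z + (absz r)%:Z = (absz (r + (i : nat)%:Z + (absz r)%:Z))%:Z.
  by lia.
by rewrite exprnP -expfzDr ?p_neq0 // e -exprnP rpredX ?rpred_int.
Qed.

Lemma p_integral_power_denom_int (q : rat) :
  p_integral p q -> p_power_denom p q -> q \is a Num.int.
Proof.
move=> [a [c [pc ->]]] [m /intrP [j hj]].
have c0 : c%:~R != 0 :> rat by rewrite intr_eq0 (ndvdz_neq0 pc).
have e : a * p%:Z ^+ m = j * c.
  by apply: (@intr_inj rat); rewrite !intrM -hj rmorphXn /=; field.
have cp : coprimez c (p%:Z ^+ m).
  by apply: coprimezXr; rewrite coprimezE /= coprime_sym prime_coprime.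
by apply: Qint_dvdz; rewrite -(Gauss_dvdzl _ cp) e dvdz_mull.
Qed.

End PIntegral.

(* The last field says that [(P' + zeta) / Q' - b] lies in Z_p, observed
   through the approximations [z k] of [zeta]. *)
Record padic_quotient (p : nat) (z : nat -> int) (c P' Q' b : rat) : Prop :=
  PadicQuotient {
    pq_denom : p_power_denom p b;
    pq_near : `|b - P' / Q'| <= c;
    pq_integral : exists K : nat, forall k : nat, (K <= k)%N ->
      p_integral p (P' / Q' - b + Q'^-1 * (z k)%:~R) }.

Section PadicQuotient.
Context {p : nat} (p_prime : prime p) {z : nat -> int}.

Lemma padic_expansion_integral {P' Q' : rat} {a : int -> int} {r : int} (m : nat) :
  padic_expansion p z P' Q' a r ->
  exists K : nat, forall k : nat, (K <= k)%N -> p_integral p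
    (P' / Q' - zsum r (m%:Z - 1) (fun n => (a n)%:~R * p%:Q ^ n) + Q'^-1 * (z k)%:~R).
Proof.
move=> [_ [_ tail]]; have [K hK] := tail (m%:Z - 1).
by exists K => k /hK; rewrite subrK; apply: p_integral_inpZ.
Qed.

Lemma padic_quotient_round (P' Q' s u : rat) (k0 : int) :
  0 < u -> u \is a Num.int -> p_power_denom p s ->
  (exists K : nat, forall k : nat, (K <= k)%N ->
     p_integral p (P' / Q' - s + Q'^-1 * (z k)%:~R)) ->
  nearest ((P' / Q' - s) / u) k0 ->
  padic_quotient p z (u / 2) P' Q' (k0%:~R * u + s).
Proof.
move=> u_gt0 u_int ds [K hK] near.
split.
- by apply: p_power_denomD ds; apply/p_power_denom_int; rewrite rpredM ?rpred_int.
- move: near; set x := P' / Q' => near.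
  have -> : k0%:~R * u + s - x = - (u * ((x - s) / u - k0%:~R)).
    by field; rewrite gt_eqF.
  by rewrite normrN normrM (gtr0_norm u_gt0) ler_pM2l // -[2^-1]mul1r.
- exists K => k /hK pk.
  have -> : P' / Q' - (k0%:~R * u + s) + Q'^-1 * (z k)%:~R =
            P' / Q' - s + Q'^-1 * (z k)%:~R - k0%:~R * u by ring.
  apply: (p_integralB p_prime pk); apply: (p_integral_int p_prime).
  by rewrite rpredM ?rpred_int.
Qed.

Lemma sbar_padic_quotient (P' Q' b : rat) :
  sbar_of p z P' Q' b -> padic_quotient p z (p%:Q / 2) P' Q' b.
Proof.
move=> [s [k0 [[a [r [ex ->]]] [near ->]]]].
apply: padic_quotient_round near.
- by rewrite ltr0z ltz_nat prime_gt0.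
- exact: rpred_int.
- exact: p_power_denom_zsum.
- by have := padic_expansion_integral 1 ex; rewrite subrr.
Qed.

Lemma tbar_padic_quotient (P' Q' b : rat) :
  tbar_of p z P' Q' b -> padic_quotient p z (1 / 2) P' Q' b.
Proof.
move=> [t [k0 [[a [r [ex ->]]] [near ->]]]].
rewrite -[k0%:~R]mulr1; apply: padic_quotient_round; rewrite ?ltr01 ?rpred1 ?divr1 //.
- exact: p_power_denom_zsum.
- by have := padic_expansion_integral 0 ex; rewrite sub0r.
Qed.

Lemma padic_quotient_next_int {D P Q : int} {c b : rat} :
  padic_sqrt p D z -> Q != 0 -> (Q %| D - P ^+ 2)%Z ->
  padic_quotient p z c P%:~R Q%:~R b ->
  b * Q%:~R - P%:~R \is a Num.int /\
  (D%:~R - (b * Q%:~R - P%:~R) ^+ 2) / Q%:~R \is a Num.int.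
Proof.
move=> [_ z_sqrt] Q0 QdvD [b_den _ [K b_int]].
have Qr0 : Q%:~R != 0 :> rat by rewrite intr_eq0.
set k := (K + logn p `|Q|)%N; set zk : rat := (z k)%:~R.
(* [w] is [alpha - b] with [zeta] replaced by [z k]; [k >= v_p(Q)] keeps
   [(D - z k ^ 2) / Q] p-integral. *)
have w_int := b_int k (leq_addr _ _); set w := _ + _ in w_int.
have bQE : b * Q%:~R - P%:~R = zk - Q%:~R * w by rewrite /w; field.
have pint_int := p_integral_int p_prime.
have pden_int := @p_power_denom_int p.
have P1_int : b * Q%:~R - P%:~R \is a Num.int.
  apply: (p_integral_power_denom_int p_prime).
    rewrite bQE; apply: (p_integralB p_prime); first exact/pint_int/rpred_int.
    by apply: (p_integralM p_prime) w_int; exact/pint_int/rpred_int.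
  apply: p_power_denomD (p_power_denomM b_den _) (p_power_denomN _);
    exact/pden_int/rpred_int.
split=> //; apply: (p_integral_power_denom_int p_prime).
- have -> : (D%:~R - (b * Q%:~R - P%:~R) ^+ 2) / Q%:~R =
            (D - z k ^+ 2)%:~R / Q%:~R + w * (2%:R * zk - Q%:~R * w).
    by rewrite bQE rmorphB rmorphXn /=; field.
  apply: (p_integralD p_prime); last first.
    apply: (p_integralM p_prime w_int); apply: pint_int.
    have -> : 2%:R * zk - Q%:~R * w = zk + (b * Q%:~R - P%:~R) by rewrite bQE; ring.
    by rewrite rpredD ?rpred_int.
  apply: (p_integral_frac p_prime Q0 (leq_addl K _)).
  by rewrite -opprB rpredN -eqz_mod_dvd.
- have -> : (D%:~R - (b * Q%:~R - P%:~R) ^+ 2) / Q%:~R =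
            (D - P ^+ 2)%:~R / Q%:~R + b * (2%:R * P%:~R - b * Q%:~R).
    by rewrite rmorphB rmorphXn /=; field.
  apply: p_power_denomD; first exact/pden_int/Qint_dvdz.
  apply: (p_power_denomM b_den); apply: p_power_denomD.
    by apply: pden_int; rewrite rpredM ?rpred_int.
  exact/p_power_denomN/(p_power_denomM b_den)/pden_int/rpred_int.
Qed.

End PadicQuotient.

Lemma modn_pred_of_dvd {k N : nat} : (0 < N)%N -> (N %| k.+1)%N -> (k %% N = N.-1)%N.
Proof.
move=> N_gt0; rewrite /dvdn -addn1 -modnDml => /eqP rem0.
have := ltn_pmod k N_gt0; have [lt_N|gt_N|eq_N] := ltngtP (k %% N + 1) N; try lia.
by rewrite modn_small // addn1 in rem0.
Qed.

Section RealBounds.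
Variable R : realFieldType.

Lemma norm_next_le (D c P Q b : R) : Q != 0 -> `|b - P / Q| <= c ->
  `|(D - (b * Q - P) ^+ 2) / Q| <= `|D| / `|Q| + c ^+ 2 * `|Q|.
Proof.
move=> Q0; set y := b - P / Q => y_le.
have -> : b * Q - P = Q * y by rewrite /y; field.
have Q_gt0 : 0 < `|Q| by rewrite normr_gt0.
rewrite normrM normfV ler_pdivrMr // mulrDl divfK ?gt_eqF //.
have c_ge0 : 0 <= c := le_trans (normr_ge0 _) y_le.
apply: (le_trans (ler_normB _ _)); rewrite lerD2l normrX normrM exprMn mulrC.
by rewrite -[_ * `|Q| * `|Q|]mulrA -expr2 ler_wpM2r ?sqr_ge0 // lerXn2r ?nnegrE.
Qed.

Section Recurrence.
Variables (p d M : R).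
Hypotheses (p_ge5 : 5 <= p) (d_ge0 : 0 <= d) (M_ge : p ^+ 2 / 4 * d + 1 <= M).

(* [V j] is the bound after [j] steps of [x |-> d + x / 4] started at [B];
   [4 d / 3] is the fixed point of that map. *)
Let B := p ^+ 2 / 4 * M + 1.
Let V (j : nat) := (B - 4 * d / 3) / 4 ^+ j + 4 * d / 3.

Let p2_ge25 : 25 <= p ^+ 2. Proof. by have := p_ge5; nra. Qed.
Let d_le_M : d <= M - 1.
Proof. by have := p2_ge25; have := d_ge0; have := M_ge; nra. Qed.

Lemma s_step_le {x : R} : 1 <= x -> x <= M -> d / x + (p / 2) ^+ 2 * x <= B.
Proof.
move=> x_ge1 x_le; have x_gt0 : 0 < x by lra.
have p2 := p2_ge25; have dM := d_le_M; have d0 := d_ge0.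
rewrite /B -(ler_pM2r x_gt0) mulrDl divfK ?gt_eqF //.
have -> : (p / 2) ^+ 2 = p ^+ 2 / 4 by field.
case: (lerP (M - 1) x) => x_M; first by nra.
have : M - 1 <= x * (M - x) by nra.
by nra.
Qed.

Lemma t_step_le {x : R} {j : nat} :
  1 <= x -> x <= V j -> d / x + (1 / 2) ^+ 2 * x <= V j.+1.
Proof.
move=> x_ge1 x_le; have x_gt0 : 0 < x by lra.
have -> : V j.+1 = d + V j / 4 by rewrite /V exprS; field; rewrite gt_eqF ?exprn_gt0.
have : d / x <= d by rewrite ler_pdivrMr //; have := d_ge0; nra.
by lra.
Qed.

Lemma V0 : V 0 = B.
Proof. by rewrite /V expr0 divr1 subrK. Qed.

Lemma M_le_B : M <= B.
Proof. by rewrite /B; have := p2_ge25; have := d_le_M; have := d_ge0; nra. Qed.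

Lemma V_le_B (j : nat) : V j <= B.
Proof.
have B_ge : 4 * d / 3 <= B.
  by rewrite /B; have := p2_ge25; have := d_le_M; have := d_ge0; nra.
have four_j : 1 <= (4 : R) ^+ j by rewrite exprn_ege1 // ler1n.
have : (B - 4 * d / 3) / 4 ^+ j <= B - 4 * d / 3.
  by rewrite ler_pdivrMr ?exprn_gt0 //; nra.
by rewrite /V; lra.
Qed.

Lemma V_pred_le_M {N : nat} : (0 < N)%N -> p + 1 <= 2 ^+ N -> V N.-1 <= M.
Proof.
move=> N_gt0 pN.
have p5 := p_ge5; have p2 := p2_ge25; have d0 := d_ge0; have dM := M_ge.
set F := (4 : R) ^+ N.-1.
have F_ge : (p + 1) ^+ 2 / 4 <= F.
  have four : (4 : R) = 2 ^+ 2 by rewrite expr2 -natrM.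
  rewrite ler_pdivrMr // /F -exprSr prednK // four -exprM mulnC exprM.
  by rewrite lerXn2r ?nnegrE ?exprn_ge0 //; lra.
have M_ge' : 4 * d / 3 <= M by nra.
have key : B - 4 * d / 3 <= (p + 1) ^+ 2 / 4 * (M - 4 * d / 3).
  have : (2 * p + 1) * (p ^+ 2 / 4 * d + 1) <= (2 * p + 1) * M.
    by rewrite ler_wpM2l //; lra.
  have : 4 * ((p + 1) ^+ 2 - 4) / 3 * d <= (2 * p + 1) * p ^+ 2 / 4 * d.
    by rewrite ler_wpM2r // !expr2; nra.
  by rewrite /B !expr2; nra.
have : (B - 4 * d / 3) / F <= M - 4 * d / 3.
  by rewrite ler_pdivrMr ?exprn_gt0 //; nra.
by rewrite /V; lra.
Qed.

Variables (x : nat -> R) (N : nat).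
Hypotheses (N_ge2 : (2 <= N)%N) (pN : p + 1 <= 2 ^+ N).
Hypotheses (x_ge1 : forall k, 1 <= x k) (x0_le : x 0 <= M).
Hypothesis x_step : forall k,
  x k.+1 <= d / x k + (if (N %| k)%N then p / 2 else 1 / 2) ^+ 2 * x k.

Lemma x_le_phase (k : nat) : x k <= if (N %| k)%N then M else V (k %% N).-1.
Proof.
have N_gt0 : (0 < N)%N by apply: leq_trans N_ge2.
elim: k => [|k IH]; first by rewrite dvdn0.
have := x_step k; case: ifP IH => Nk IH step.
  have Nk1 : (N %| k.+1)%N = false by rewrite -addn1 dvdn_addr // dvdn1 gtn_eqF.
  rewrite Nk1 modnS Nk1 (eqP Nk) V0.
  exact: le_trans step (s_step_le (x_ge1 k) IH).
have j_gt0 : (0 < k %% N)%N by rewrite lt0n; apply/negbT.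
have step' : x k.+1 <= V (k %% N).
  by rewrite -(prednK j_gt0); apply: le_trans step (t_step_le (x_ge1 k) IH).
case: ifP => [Nk1 | Nk1]; last by rewrite modnS Nk1.
rewrite (modn_pred_of_dvd N_gt0 Nk1) in step'.
exact: le_trans step' (V_pred_le_M N_gt0 pN).
Qed.

Lemma x_le_bound (k : nat) : x k <= B.
Proof.
have := x_le_phase k; case: ifP => _ /le_trans; apply.
- exact: M_le_B.
- exact: V_le_B.
Qed.

End Recurrence.
End RealBounds.

Lemma up_log2_prime {p : nat} : prime p -> (2 < p)%N ->
  (2 <= up_log 2 p)%N /\ (p < 2 ^ up_log 2 p)%N.
Proof.
move=> p_prime p_gt2; set N := up_log 2 p.
have p_le : (p <= 2 ^ N)%N := up_logP p (isT : (1 < 2)%N).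
have N_gt0 : (0 < N)%N by rewrite up_log_gt0 /= ltnW.
have p_neq : p != (2 ^ N)%N.
  apply: contraTneq p_gt2 => pE; have : (2 %| p)%N by rewrite pE dvdn_exp.
  by rewrite dvdn_prime2 // => /eqP <-.
have p_lt : (p < 2 ^ N)%N by rewrite ltn_neqAle p_neq.
split=> //; rewrite ltnNge; apply: contraTN p_lt => N_le1.
by rewrite -leqNgt (leq_trans (leq_pexp2l _ N_le1)) // ltnW.
Qed.

Section PadicContinuedFraction.
Variables (p : nat) (D P Q : int) (z : nat -> int) (Pn Qn bn c : nat -> rat).
Hypotheses (p_prime : prime p) (D_nonsquare : forall x : int, x ^+ 2 != D).
Hypotheses (z_sqrt : padic_sqrt p D z) (Q_neq0 : Q != 0) (Q_dvd : (Q %| D - P ^+ 2)%Z).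
Hypotheses (P0 : Pn 0%N = P%:~R) (Q0 : Qn 0%N = Q%:~R).
Hypothesis b_quot : forall n, padic_quotient p z (c n) (Pn n) (Qn n) (bn n).
Hypothesis P_rec : forall n, Pn n.+1 = bn n * Qn n - Pn n.
Hypothesis Q_rec : forall n, Qn n.+1 = (D%:~R - Pn n.+1 ^+ 2) / Qn n.

Lemma cf_integral (n : nat) : exists Pi Qi : int,
  [/\ Pn n = Pi%:~R, Qn n = Qi%:~R, Qi != 0 & (Qi %| D - Pi ^+ 2)%Z].
Proof.
elim: n => [|n [Pi [Qi [PE QE Qi0 Qi_dvd]]]]; first by exists P, Q.
have := b_quot n; rewrite PE QE => quot.
have [/intrP [P1 P1E] /intrP [Q1 Q1E]] :=
  padic_quotient_next_int p_prime z_sqrt Qi0 Qi_dvd quot.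
have Q1QE : Q1 * Qi = D - P1 ^+ 2.
  apply: (@intr_inj rat).
  by rewrite intrM rmorphB rmorphXn /= -Q1E -P1E divfK ?intr_eq0.
exists P1, Q1; split.
- by rewrite P_rec PE QE.
- by rewrite Q_rec P_rec PE QE.
- apply: contra_neq (D_nonsquare P1) => Q10.
  by apply/esym/subr0_eq; rewrite -Q1QE Q10 mul0r.
- by apply/dvdzP; exists Qi; rewrite -Q1QE mulrC.
Qed.

Lemma cf_norm_ge1 (n : nat) : 1 <= `|Qn n|.
Proof.
have [Pi [Qi [_ -> Qi0 _]]] := cf_integral n.
by rewrite -intr_norm ler1z; lia.
Qed.

Lemma cf_norm_step (n : nat) :
  `|Qn n.+1| <= `|D%:~R| / `|Qn n| + c n ^+ 2 * `|Qn n|.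
Proof.
have [Pi [Qi [_ QE Qi0 _]]] := cf_integral n.
rewrite Q_rec P_rec; apply: norm_next_le; first by rewrite QE intr_eq0.
exact: pq_near (b_quot n).
Qed.

End PadicContinuedFraction.

Theorem lemma6 (p : nat) (P Q D : int) (z : nat -> int)
    (Pn Qn bn : nat -> rat) :
  prime p -> (5 <= p)%N ->
  Q != 0 ->
  (forall x : int, x ^+ 2 != D) ->
  padic_sqrt p D z ->
  (Q %| D - P ^+ 2)%Z ->
  Pn 0%N = P%:~R -> Qn 0%N = Q%:~R ->
  (forall n : nat,
     (if (up_log 2 p %| n)%N then sbar_of p z (Pn n) (Qn n) (bn n)
      else tbar_of p z (Pn n) (Qn n) (bn n))) ->
  (forall n : nat, Pn n.+1 = bn n * Qn n - Pn n) ->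
  (forall n : nat, Qn n.+1 = (D%:~R - Pn n.+1 ^+ 2) / Qn n) ->
  (forall n : nat, bn n != 0) ->
  let M := Num.max `|Q%:~R : rat|
             (Num.max ((p%:Q) ^+ 2 / 4 * `|D%:~R : rat| + 1)
                      (4 * ((p%:Q) ^+ 2 + 1) / 3)) in
  forall n : nat, `|Qn n| <= (p%:Q) ^+ 2 / 4 * M + 1.
Proof.
(* Neither [bn n != 0] nor the third entry of [M] is needed. *)
move=> p_prime p_ge5 Q_neq0 D_nonsq z_sqrt Q_dvd P0 Q0 b_def P_rec Q_rec _ M n.
set N := up_log 2 p.
have [N_ge2 p_lt] := up_log2_prime p_prime (leq_trans (isT : (2 < 5)%N) p_ge5).
have pE : p%:Q = p%:R by rewrite -pmulrn.
pose c k := if (N %| k)%N then p%:Q / 2 else 1 / 2.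
have quot k : padic_quotient p z (c k) (Pn k) (Qn k) (bn k).
  rewrite /c; have := b_def k; rewrite -/N; case: ifP => _.
  - exact: sbar_padic_quotient.
  - exact: tbar_padic_quotient.
apply: (@x_le_bound _ _ `|D%:~R| _ _ _ _ (fun k => `|Qn k|) N) => //.
- by rewrite pE ler_nat.
- by rewrite /M !le_max lexx orbT.
- by rewrite pE natr1 -natrX ler_nat.
- exact: cf_norm_ge1 p_prime D_nonsq z_sqrt Q_neq0 Q_dvd P0 Q0 quot P_rec Q_rec.
- by rewrite Q0 /M le_max lexx.
- exact: cf_norm_step p_prime D_nonsq z_sqrt Q_neq0 Q_dvd P0 Q0 quot P_rec Q_rec.
Qed.
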